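(* Let $p\in(1,\infty)$ and let $u\in C(Q_1)$ be a viscosity solution of $\mathcal{L}u-u_t=f$ in $U^+:=\{u>0\}$, where $f$ satisfies $0<c_0\le f\le c_1$. Then for every $(z,s)\in\overline{\{u>0\}}$ and $r>0$ with $Q_r(z,s)\subset Q_1$, $$\sup_{(x,t)\in\partial_pQ^-_r(z,s)}u(x,t)\ge\mu_0r^2+u(z,s),\qquad \mu_0=\min\Big(\frac{pc_0}{4(n+p-2)},\frac{c_0}{2}\Big).$$
   Context: $\mathcal{L}v=\frac1p\Delta v+\frac{p-2}{p}\langle D^2v\frac{\nabla v}{|\nabla v|},\frac{\nabla v}{|\nabla v|}\rangle$; viscosity solutions are defined via $C^2$ test functions, using $\mathcal{L}\phi-\phi_t$ when $\nabla\phi\neq0$, and $\Delta\phi+(p-2)\lambda_{\max}(D^2\phi)-\phi_t$ (if $p\ge2$) or $\Delta\phi+(p-2)\lambda_{\min}(D^2\phi)-\phi_t$ (if $1<p<2$) when $\nabla\phi=0$. $Q_r(z,s)=B_r(z)\times(s-r^2,s+r^2)$, $Q_1=Q_1(0,0)$, $Q^-_r(z,s)=B_r(z)\times(s-r^2,s]$, and $\partial_p$ denotes the parabolic boundary (lateral boundary together with the bottom). *)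

From HB Require Import structures.
From mathcomp Require Import all_boot all_order all_algebra.
From mathcomp Require Import all_classical all_reals all_analysis.
Set Implicit Arguments. Unset Strict Implicit. Unset Printing Implicit Defensive.
Import Order.TTheory GRing.Theory Num.Theory.
Import numFieldNormedType.Exports.
Local Open Scope classical_set_scope.
Local Open Scope ring_scope.

Definition pt (R : realType) (n : nat) := ('rV[R]_n * R)%type.

(* Coordinate directions: Some i = e_i in space, None = time direction. *)
Definition dir (R : realType) (n : nat) (k : option 'I_n) : pt R n :=
  match k with Some i => (delta_mx 0 i, 0) | None => (0, 1) end.

Definition shift (R : realType) (n : nat) (P v : pt R n) (h : R) : pt R n :=
  (P.1 + h *: v.1, P.2 + h * v.2).

Definition pderiv (R : realType) (n : nat) (k : option 'I_n)
  (phi : pt R n -> R) (P : pt R n) : R :=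
  derive1 (fun h : R => phi (shift P (@dir R n k) h)) 0.

Definition pderivable (R : realType) (n : nat) (k : option 'I_n)
  (phi : pt R n -> R) (P : pt R n) : Prop :=
  derivable (fun h : R => phi (shift P (@dir R n k) h)) 0 1.

Definition C2_on (R : realType) (n : nat) (V : set (pt R n)) (phi : pt R n -> R) : Prop :=
  forall P, V P ->
    {for P, continuous phi} /\
    (forall k, pderivable k phi P /\ {for P, continuous (pderiv k phi)}) /\
    (forall k l, pderivable l (pderiv k phi) P /\
                 {for P, continuous (pderiv l (pderiv k phi))}).

Definition grad (R : realType) (n : nat) (phi : pt R n -> R) (P : pt R n) : 'rV[R]_n :=
  \row_i pderiv (Some i) phi P.

Definition hess (R : realType) (n : nat) (phi : pt R n -> R) (P : pt R n) : 'M[R]_n :=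
  \matrix_(i, j) pderiv (Some i) (pderiv (Some j) phi) P.

Definition dt (R : realType) (n : nat) (phi : pt R n -> R) (P : pt R n) : R :=
  pderiv None phi P.

Definition lap (R : realType) (n : nat) (phi : pt R n -> R) (P : pt R n) : R :=
  \tr (hess phi P).

Definition lambda_max (R : realType) (n : nat) (A : 'M[R]_n) : R :=
  sup [set a : R | eigenvalue A a].
Definition lambda_min (R : realType) (n : nat) (A : 'M[R]_n) : R :=
  inf [set a : R | eigenvalue A a].

(* normalized p-Laplacian  L phi = (1/p) Delta phi + (p-2)/p <D^2 phi g/|g|, g/|g|> *)
Definition Lop (R : realType) (n : nat) (p : R) (phi : pt R n -> R) (P : pt R n) : R :=
  let g := grad phi P in let H := hess phi P in
  p^-1 * lap phi P + (p - 2) / p * ((g *m H *m g^T) 0 0 / (g *m g^T) 0 0).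

(* upper / lower semicontinuous envelopes of L at vanishing gradient *)
Definition Lup (R : realType) (n : nat) (p : R) (phi : pt R n -> R) (P : pt R n) : R :=
  if 2 <= p then p^-1 * (lap phi P + (p - 2) * lambda_max (hess phi P))
  else p^-1 * (lap phi P + (p - 2) * lambda_min (hess phi P)).
Definition Llow (R : realType) (n : nat) (p : R) (phi : pt R n -> R) (P : pt R n) : R :=
  if 2 <= p then p^-1 * (lap phi P + (p - 2) * lambda_min (hess phi P))
  else p^-1 * (lap phi P + (p - 2) * lambda_max (hess phi P)).

Definition test_fun_at (R : realType) (n : nat) (phi : pt R n -> R) (P0 : pt R n) : Prop :=
  exists V : set (pt R n), open V /\ V P0 /\ C2_on V phi.

Definition visc_sub (R : realType) (n : nat) (p : R) (f : pt R n -> R)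
  (U : set (pt R n)) (u : pt R n -> R) : Prop :=
  forall P0, U P0 -> forall phi : pt R n -> R, test_fun_at phi P0 ->
    (\forall P \near P0, u P - phi P <= u P0 - phi P0) ->
    if grad phi P0 != 0 then f P0 <= Lop p phi P0 - dt phi P0
    else f P0 <= Lup p phi P0 - dt phi P0.

Definition visc_super (R : realType) (n : nat) (p : R) (f : pt R n -> R)
  (U : set (pt R n)) (u : pt R n -> R) : Prop :=
  forall P0, U P0 -> forall phi : pt R n -> R, test_fun_at phi P0 ->
    (\forall P \near P0, u P0 - phi P0 <= u P - phi P) ->
    if grad phi P0 != 0 then Lop p phi P0 - dt phi P0 <= f P0
    else Llow p phi P0 - dt phi P0 <= f P0.

Definition visc_sol (R : realType) (n : nat) (p : R) (f : pt R n -> R)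
  (U : set (pt R n)) (u : pt R n -> R) : Prop :=
  visc_sub p f U u /\ visc_super p f U u.

Definition eucl2 (R : realType) (n : nat) (x : 'rV[R]_n) : R := \sum_i (x 0 i) ^+ 2.

Definition Qcyl (R : realType) (n : nat) (z : 'rV[R]_n) (s r : R) : set (pt R n) :=
  [set P | eucl2 (P.1 - z) < r ^+ 2 /\ s - r ^+ 2 < P.2 < s + r ^+ 2].

Definition Q1 (R : realType) (n : nat) : set (pt R n) := Qcyl (0 : 'rV[R]_n) 0 1.

Definition pbdry_Qminus (R : realType) (n : nat) (z : 'rV[R]_n) (s r : R) : set (pt R n) :=
  [set P | (eucl2 (P.1 - z) = r ^+ 2 /\ s - r ^+ 2 <= P.2 <= s) \/
           (eucl2 (P.1 - z) <= r ^+ 2 /\ P.2 = s - r ^+ 2)].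

(* U^+ = {u > 0} (inside Q_1, the domain of u) *)
Definition Uplus (R : realType) (n : nat) (u : pt R n -> R) : set (pt R n) :=
  [set P | @Q1 R n P /\ 0 < u P].

From Pilot Require Import Defs.
From HB Require Import structures.
From mathcomp Require Import all_boot all_order all_algebra.
From mathcomp Require Import all_classical all_reals all_analysis.
From mathcomp Require Import ring lra.

Import Order.TTheory GRing.Theory Num.Theory.
Import numFieldNormedType.Exports.
Local Open Scope classical_set_scope.
Local Open Scope ring_scope.

(* Argue by contradiction: suppose u stays below mu r^2 + u(z,s) on the parabolic boundary of
   Q^-_r(z,s) for some rate mu < mu0.  Take a point (z',s') of {u > 0} close to (z,s) and the
   barrier
     phi(x,t) = A + mu (|x - z'|^2 - (t - s')) + eta exp(beta (t - s')).
   Its Hessian is 2 mu I, so L phi - phi_t <= mu (2 (n + p - 2) / p + 1) < c0 <= f whatever the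
   gradient: phi is a strict supersolution, and u - phi has no positive local maximum in
   {u > 0}.  For suitable A, eta, beta and a small time step tau, u < phi on the boundary of
   the closed cylinder B_r(z) x [s - r^2, s' + tau] and phi > 0 inside, so u <= phi on it; but
   phi(z',s') = u(z',s') - eta.  The cylinder has to reach past time s, as s' may exceed s: on
   the extra lateral strip u is controlled by continuity, on the top by the exponential. *)

(* This is where the constant mu0 of the theorem comes from: for mu < mu0 the barrier below
   is a strict supersolution, see [Lsub_barrier_le]. *)
Lemma growth_rate_bound {R : realFieldType} {N p c0 : R} : 1 <= N -> 1 < p -> 0 < c0 ->
  let mu0 := Num.min (p * c0 / (4 * (N + p - 2))) (c0 / 2) in
  0 < mu0 /\ mu0 * (2 * (N + p - 2) / p + 1) <= c0.
Proof.
move=> N_ge1 p_gt1 c0_gt0 mu0; have Np_gt0 : 0 < N + p - 2 by lra.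
have [mu0_le1 mu0_le2] : mu0 <= p * c0 / (4 * (N + p - 2)) /\ mu0 <= c0 / 2.
  by split; rewrite ge_min lexx ?orbT.
have : mu0 * (2 * (N + p - 2) / p) <= c0 / 2.
  have <- : p * c0 / (4 * (N + p - 2)) * (2 * (N + p - 2) / p) = c0 / 2.
    by field; rewrite !gt_eqF //; lra.
  by rewrite ler_wpM2r // divr_ge0 //; lra.
split; last lra.
by rewrite lt_min !divr_gt0 ?mulr_gt0 //; lra.
Qed.

Lemma smaller_rate_gap {R : realFieldType} {mu0 r u0 M : R} : 0 < mu0 -> 0 < r ->
  M < mu0 * r ^+ 2 + u0 ->
  exists mu delta, [/\ 0 < mu, mu < mu0, 0 < delta & M <= mu * r ^+ 2 + u0 - delta].
Proof.
move=> mu0_gt0 r_gt0 M_lt; have r2_gt0 : 0 < r ^+ 2 by rewrite exprn_gt0.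
set delta := Num.min (mu0 * r ^+ 2 + u0 - M) (mu0 * r ^+ 2) / 2.
have [gap_le mu0r_le] : 2 * delta <= mu0 * r ^+ 2 + u0 - M /\ 2 * delta <= mu0 * r ^+ 2.
  by rewrite /delta mulrC divfK ?pnatr_eq0 //; split; rewrite ge_min lexx ?orbT.
have delta_gt0 : 0 < delta by rewrite divr_gt0 // lt_min subr_gt0 M_lt mulr_gt0.
exists (mu0 - delta / r ^+ 2), delta; split => //.
- by rewrite subr_gt0 ltr_pdivrMr //; lra.
- by rewrite gtrBl divr_gt0.
- by rewrite mulrBl divfK ?gt_eqF //; lra.
Qed.

Lemma ereal_sup_lt_bound {T : Type} {R : realType} (g : T -> R) (S : set T) (x : R) :
  (ereal_sup [set (g P)%:E | P in S] < x%:E)%E -> exists2 M, M < x & forall P, S P -> g P <= M.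
Proof.
have ub P : S P -> ((g P)%:E <= ereal_sup [set (g P)%:E | P in S])%E.
  by move=> SP; apply: ereal_sup_ubound; exists P.
case: (ereal_sup _) ub => [m| |] ub //; first by rewrite lte_fin => m_lt; exists m => // P /ub.
by move=> _; exists (x - 1) => [|P /ub //]; lra.
Qed.

Section Euclidean.
Context {R : realType} {n : nat}.
Implicit Types (x y c : 'rV[R]_n).

Lemma eucl2_ge0 x : 0 <= eucl2 x.
Proof. by apply: sumr_ge0 => i _; exact: sqr_ge0. Qed.

Lemma eucl2_0 : eucl2 (0 : 'rV[R]_n) = 0.
Proof. by apply: big1 => i _; rewrite mxE expr0n. Qed.

Lemma eucl2_shift x c i (h : R) :
  eucl2 (x + h *: delta_mx 0 i - c) = eucl2 (x - c) + 2 * (x 0 i - c 0 i) * h + h ^+ 2.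
Proof.
rewrite /eucl2 (bigD1 i) //= [in RHS](bigD1 i) //= !mxE !eqxx mulr1.
rewrite (eq_bigr (fun j => (x - c) 0 j ^+ 2)); last first.
  by move=> j ji; rewrite !mxE (negbTE ji) mulr0 addr0.
ring.
Qed.

Lemma eucl2_subr_ge x y (lam : R) : 0 < lam ->
  (1 - lam) * eucl2 x - lam^-1 * eucl2 y <= eucl2 (x - y).
Proof.
move=> lam_gt0; rewrite /eucl2 !mulr_sumr -sumrB; apply: ler_sum => i _.
rewrite !mxE; set a := x 0 i; set b := y 0 i.
have : 0 <= lam^-1 * (lam * a - b) ^+ 2 by rewrite mulr_ge0 ?sqr_ge0 ?invr_ge0 ?ltW.
have -> : lam^-1 * (lam * a - b) ^+ 2 = lam * a ^+ 2 - 2 * a * b + lam^-1 * b ^+ 2.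
  by field; rewrite gt_eqF.
move=> ?; nra.
Qed.

Lemma continuous_eucl2B c : continuous (fun x => eucl2 (x - c)).
Proof.
have -> : (fun x => eucl2 (x - c)) = fun x => \sum_i (x 0 i - c 0 i) * (x 0 i - c 0 i).
  by apply: funext => x; apply: eq_bigr => i _; rewrite !mxE expr2.
move=> x; apply: (cvg_big (F := nbhs x) add_continuous) => // i _.
by apply: cvgM; apply: cvgB; (exact: coord_continuous || exact: cvg_cst).
Qed.

Lemma continuous_mulmx_tr c : continuous (fun x => (x *m c^T) 0 0).
Proof.
have -> : (fun x => (x *m c^T) 0 0) = fun x => \sum_i x 0 i * c 0 i.
  by apply: funext => x; rewrite !mxE; apply: eq_bigr => i _; rewrite mxE.
move=> x; apply: (cvg_big (F := nbhs x) add_continuous) => // i _.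
by apply: cvgM; [exact: coord_continuous|exact: cvg_cst].
Qed.

Lemma closed_eucl2B_le c (a : R) : closed [set x | eucl2 (x - c) <= a].
Proof.
apply: (preimage_closed (D := [set y | y <= a])); last exact: closed_le.
by move=> x _; exact: continuous_eucl2B.
Qed.

Lemma closed_eucl2B_eq c (a : R) : closed [set x | eucl2 (x - c) = a].
Proof.
apply: (preimage_closed (D := [set y | y = a])); last exact: closed_eq.
by move=> x _; exact: continuous_eucl2B.
Qed.

Lemma compact_eucl2B_le c (r : R) : 0 <= r -> compact [set x | eucl2 (x - c) <= r ^+ 2].
Proof.
move=> r_ge0; apply: (subclosed_compact (closed_eucl2B_le c _)
  (@rV_compact _ _ (fun i => `[c 0 i - r, c 0 i + r]%classic) _)) => [i|x /= le_r i].
  exact: segment_compact.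
have : (x 0 i - c 0 i) ^+ 2 <= r ^+ 2.
  apply: le_trans le_r; rewrite /eucl2 (bigD1 i) //= !mxE lerDl.
  by apply: sumr_ge0 => j _; exact: sqr_ge0.
by rewrite in_itv /=; move=> ?; apply/andP; split; nra.
Qed.

Lemma compact_eucl2B_eq c (r : R) : 0 <= r -> compact [set x | eucl2 (x - c) = r ^+ 2].
Proof.
move=> r_ge0; have -> : [set x | eucl2 (x - c) = r ^+ 2] =
    [set x | eucl2 (x - c) <= r ^+ 2] `&` [set x | eucl2 (x - c) = r ^+ 2].
  by apply/seteqP; split => x /= => [->|[]//]; rewrite lexx.
by apply: compact_closedI; [exact: compact_eucl2B_le|exact: closed_eucl2B_eq].
Qed.

End Euclidean.

Definition cyl {R : realType} {n : nat} (z : 'rV[R]_n) (r lo hi : R) : set (pt R n) :=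
  [set x | eucl2 (x - z) <= r ^+ 2] `*` `[lo, hi].

Section Cylinder.
Context {R : realType} {n : nat} {z : 'rV[R]_n} {r lo hi : R}.

Lemma compact_cyl : 0 <= r -> compact (cyl z r lo hi).
Proof.
by move=> r_ge0; apply: compact_setX; [exact: compact_eucl2B_le|exact: segment_compact].
Qed.

Lemma near_cyl (P : pt R n) : eucl2 (P.1 - z) < r ^+ 2 -> lo < P.2 < hi ->
  \forall Q \near P, cyl z r lo hi Q.
Proof.
move=> lt_r /andP[lo_lt lt_hi]; near=> Q; split; rewrite /= ?in_itv /=.
- apply: ltW; near: Q; apply: (cvgr_lt _ _ _ lt_r).
  exact: (continuous_comp cvg_fst (continuous_eucl2B z _)).
- apply/andP; split; apply: ltW; near: Q.
  + exact: (cvgr_gt _ cvg_snd _ lo_lt).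
  + exact: (cvgr_lt _ cvg_snd _ lt_hi).
Unshelve. all: end_near.
Qed.

Lemma cyl_subset {hi' : R} : hi <= hi' -> cyl z r lo hi `<=` cyl z r lo hi'.
Proof.
move=> le_hi [x t] [/= x_in]; rewrite in_itv /= => /andP[lo_le t_le].
by split=> //=; rewrite in_itv /= lo_le (le_trans t_le le_hi).
Qed.

Lemma cyl_EVT_max (g : pt R n -> R) : 0 <= r -> lo <= hi ->
  (forall P, cyl z r lo hi P -> {for P, continuous g}) ->
  exists2 Pm, cyl z r lo hi Pm & forall P, cyl z r lo hi P -> g P <= g Pm.
Proof.
move=> r_ge0 lo_le g_cont.
have [Pm /set_mem DPm Pm_max] : exists2 Pm, Pm \in cyl z r lo hi &
    forall P, P \in cyl z r lo hi -> g P <= g Pm.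
  apply: compact_EVT_max; [|exact: compact_cyl|].
    by exists (z, lo); split; rewrite /= ?subrr ?eucl2_0 ?exprn_ge0 // in_itv /= lexx.
  by apply: continuous_in_subspaceT => P /set_mem; exact: g_cont.
by exists Pm => // P DP; exact: Pm_max (mem_set DP).
Qed.

End Cylinder.

Lemma cyl_sub_Q1 {R : realType} {n : nat} (z : 'rV[R]_n) (s r hi : R) : 0 < r -> hi < 1 ->
  Qcyl z s r `<=` @Q1 R n -> pbdry_Qminus z s r `<=` @Q1 R n ->
  cyl z r (s - r ^+ 2) hi `<=` @Q1 R n.
Proof.
move=> r_gt0 hi_lt1 Qcyl_Q1 pbdry_Q1 [x t] [/= x_in]; rewrite in_itv /= => /andP[t_ge t_le].
have r2_gt0 : 0 < r ^+ 2 by rewrite exprn_gt0.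
have [_ /andP[bot_gt _]] : Q1 (z, s - r ^+ 2).
  by apply: pbdry_Q1; right; rewrite /= subrr eucl2_0 ltW.
have [x_in1 _] : Q1 (x, s).
  move: x_in; rewrite le_eqVlt => /orP[/eqP x_sph|x_in].
  - by apply: pbdry_Q1; left; split => //=; apply/andP; split; lra.
  - by apply: Qcyl_Q1; split => //=; apply/andP; split; lra.
by split => //=; apply/andP; split; move: bot_gt; rewrite /= ?expr1n; lra.
Qed.

Lemma tube_lt {R : realType} {X : topologicalType} {S : set X} {g : X * R -> R} {s M : R} :
  compact S -> (forall x, S x -> {for (x, s), continuous g}) ->
  (forall x, S x -> g (x, s) < M) ->
  exists2 d, 0 < d & forall x t, S x -> s <= t <= s + d -> g (x, t) < M.
Proof.
move=> S_cpt g_cont g_lt.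
have : \forall d \near (0 : R)^'+, S `<=` [set x | forall t, s <= t <= s + d -> g (x, t) < M].
  apply: (compact_near_coveringP S).1 => // x Sx.
  have [[A B] /= [A_nbhs /nbhs_ballP[e e_gt0 sB]] AB_lt] := cvgr_lt _ (g_cont x Sx) _ (g_lt x Sx).
  exists (A, [set d : R | 0 < d < e]); first split => //=.
    by near=> d; apply/andP; split; near: d; [exact: nbhs_right_gt|exact: nbhs_right_lt].
  move=> [y d] /= [Ay /andP[d_gt0 d_lt]] t /andP[le_st le_td]; apply: (AB_lt (y, t)).
  by split => //=; apply: sB; rewrite /ball /= ler0_norm; lra.
move=> near_d; have : \forall d \near (0 : R)^'+,
    0 < d /\ S `<=` [set x | forall t, s <= t <= s + d -> g (x, t) < M].
  by near=> d; split; near: d; [exact: nbhs_right_gt|exact: near_d].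
by move=> /filter_ex[d [d_gt0 Sd]]; exists d => // x t /Sd; apply.
Unshelve. all: end_near.
Qed.

Lemma pbdry_lateral_strip {R : realType} {n : nat} {u : pt R n -> R} {z : 'rV[R]_n}
    {s r M L : R} : 0 < r -> (forall P, Q1 P -> {for P, continuous u}) ->
  Qcyl z s r `<=` @Q1 R n -> pbdry_Qminus z s r `<=` @Q1 R n ->
  (forall P, pbdry_Qminus z s r P -> u P <= M) -> M < L ->
  exists2 d, 0 < d /\ s + d < 1 &
    forall x t, eucl2 (x - z) = r ^+ 2 -> s - r ^+ 2 <= t <= s + d -> u (x, t) < L.
Proof.
move=> r_gt0 u_cont Qcyl_Q1 pbdry_Q1 u_le_M M_lt.
have u_side x t : eucl2 (x - z) = r ^+ 2 -> s - r ^+ 2 <= t <= s -> u (x, t) <= M.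
  by move=> x_sph t_in; apply: u_le_M; left.
have [d0 d0_gt0 u_strip] : exists2 d0, 0 < d0 & forall x t, eucl2 (x - z) = r ^+ 2 ->
    s <= t <= s + d0 -> u (x, t) < L.
  apply: tube_lt (compact_eucl2B_eq z r (ltW r_gt0)) _ _ => x x_sph.
    by apply: u_cont; apply: pbdry_Q1; left; rewrite /= lexx andbT gerBl sqr_ge0.
  by have := u_side x s x_sph; rewrite lexx andbT gerBl sqr_ge0 => /(_ isT); lra.
have [_ /andP[_]] : Q1 (z, s).
  by apply: Qcyl_Q1; rewrite /Qcyl /= subrr eucl2_0 exprn_gt0 // gtrBl ltrDl exprn_gt0.
rewrite /= expr1n add0r => s_lt1.
set d := Num.min d0 ((1 - s) / 2).
have [d_le_d0 d_le] : d <= d0 /\ d <= (1 - s) / 2 by split; rewrite ge_min lexx ?orbT.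
exists d; first by split; [rewrite lt_min d0_gt0 divr_gt0 ?subr_gt0|lra].
move=> x t x_sph /andP[t_ge t_le]; case: (lerP t s) => [t_le_s|s_lt_t].
  by have := u_side _ _ x_sph (introT andP (conj t_ge t_le_s)); lra.
by apply: u_strip => //; rewrite ltW //= (le_trans t_le) // lerD2l.
Qed.

Lemma is_derive0_quad_expR {R : realType} (k0 k1 k2 a b0 b : R) :
  is_derive (0 : R) 1 (fun h : R => k0 + k1 * h + k2 * h ^+ 2 + a * expR (b0 + b * h))
    (k1 + a * (expR b0 * b)).
Proof. by apply: is_derive_eq; rewrite /GRing.scale /= mulr0 addr0; ring. Qed.

Section QuadExp.
Context {R : realType} {n : nat}.
Variables (z : 'rV[R]_n) (s : R).

(* This family is closed under partial derivatives, hence consists of C^2 functions. *)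
Definition quad_exp (a : R) (g : 'rV[R]_n) (k c e b : R) (P : pt R n) : R :=
  a + (P.1 *m g^T) 0 0 + k * P.2 + c * eucl2 (P.1 - z) + e * expR (b * (P.2 - s)).

Definition quad_exp_fun (F : pt R n -> R) : Prop :=
  exists a g k c e b, F = quad_exp a g k c e b.

Variables (a : R) (g : 'rV[R]_n) (k c e b : R).

Let F := quad_exp a g k c e b.

Lemma quad_exp_shift_space (P : pt R n) j :
  (fun h => F (Defs.shift P (dir R (Some j)) h)) =
  (fun h => F P - e * expR (b * (P.2 - s)) + (g 0 j + 2 * c * (P.1 0 j - z 0 j)) * h
            + c * h ^+ 2 + e * expR (b * (P.2 - s) + 0 * h)).
Proof.
apply: funext => h; rewrite /F /quad_exp /Defs.shift /= mulr0 !addr0 mul0r addr0 eucl2_shift.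
by rewrite mulmxDl -scalemxAl -rowE !mxE; ring.
Qed.

Lemma quad_exp_shift_time (P : pt R n) :
  (fun h => F (Defs.shift P (dir R None) h)) =
  (fun h => F P - e * expR (b * (P.2 - s)) + k * h + 0 * h ^+ 2
            + e * expR (b * (P.2 - s) + b * h)).
Proof.
apply: funext => h; rewrite /F /quad_exp /Defs.shift /= scaler0 !addr0 mulr1.
by rewrite (_ : b * (P.2 + h - s) = b * (P.2 - s) + b * h); ring.
Qed.

Lemma pderivable_quad_exp d P : pderivable d F P.
Proof.
rewrite /pderivable; case: d => [j|].
- by rewrite quad_exp_shift_space; exact: ex_derive.
- by rewrite quad_exp_shift_time; exact: ex_derive.
Qed.

Lemma pderiv_quad_exp_space j :
  pderiv (Some j) F = quad_exp (g 0 j - 2 * c * z 0 j) (2 * c *: delta_mx 0 j) 0 0 0 0.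
Proof.
apply: funext => P; rewrite /pderiv quad_exp_shift_space derive1E.
rewrite (@derive_val _ _ _ _ _ _ _ (is_derive0_quad_expR _ _ _ _ _ _)) /quad_exp.
by rewrite [(_ *: _)^T]linearZ /= trmx_delta -scalemxAr -colE !mxE; ring.
Qed.

Lemma pderiv_quad_exp_time : pderiv None F = quad_exp k 0 0 0 (e * b) b.
Proof.
apply: funext => P; rewrite /pderiv quad_exp_shift_time derive1E.
rewrite (@derive_val _ _ _ _ _ _ _ (is_derive0_quad_expR _ _ _ _ _ _)).
by rewrite /quad_exp trmx0 mulmx0 mxE; ring.
Qed.

Lemma continuous_quad_exp : continuous F.
Proof.
move=> P; rewrite /F /quad_exp.
apply: cvgD; first apply: cvgD; first apply: cvgD; first apply: cvgD.
- exact: cvg_cst.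
- exact: (continuous_comp cvg_fst (continuous_mulmx_tr g _)).
- by apply: cvgM; [exact: cvg_cst|exact: cvg_snd].
- by apply: cvgM; [exact: cvg_cst|exact: (continuous_comp cvg_fst (continuous_eucl2B z _))].
- apply: cvgM; first exact: cvg_cst.
  apply: (@continuous_comp _ _ _ (fun Q : pt R n => b * (Q.2 - s)) expR).
    by apply: cvgM; [exact: cvg_cst|apply: cvgB; [exact: cvg_snd|exact: cvg_cst]].
  exact: continuous_expR.
Qed.

End QuadExp.

Section QuadExpFun.
Context {R : realType} {n : nat}.
Variables (z : 'rV[R]_n) (s : R).
Implicit Types (F : pt R n -> R).

Lemma quad_exp_fun_pderiv d F : quad_exp_fun z s F -> quad_exp_fun z s (pderiv d F).
Proof.
move=> [a [g [k [c [e [b ->]]]]]]; case: d => [j|].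
- by rewrite pderiv_quad_exp_space; do 6 eexists.
- by rewrite pderiv_quad_exp_time; do 6 eexists.
Qed.

Lemma quad_exp_fun_continuous F : quad_exp_fun z s F -> continuous F.
Proof. by move=> [a [g [k [c [e [b ->]]]]]]; exact: continuous_quad_exp. Qed.

Lemma quad_exp_fun_pderivable d F P : quad_exp_fun z s F -> pderivable d F P.
Proof. by move=> [a [g [k [c [e [b ->]]]]]]; exact: pderivable_quad_exp. Qed.

Lemma C2_on_quad_exp_fun F : quad_exp_fun z s F -> C2_on setT F.
Proof.
move=> qF P _; split; first exact: quad_exp_fun_continuous.
have qdF d : quad_exp_fun z s (pderiv d F) by exact: quad_exp_fun_pderiv.
split=> [d|d d']; split.
- exact: quad_exp_fun_pderivable.
- exact: quad_exp_fun_continuous.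
- exact: quad_exp_fun_pderivable.
- exact/quad_exp_fun_continuous/quad_exp_fun_pderiv.
Qed.

End QuadExpFun.

Definition Lsub {R : realType} {n : nat} (p : R) (phi : pt R n -> R) (P : pt R n) : R :=
  if grad phi P != 0 then Lop p phi P else Lup p phi P.

Section ScalarHessian.
Context {R : realType} {n : nat}.
Hypothesis n_gt0 : (0 < n)%N.

Lemma mulmx_tr_self_eq0 (g : 'rV[R]_n) : ((g *m g^T) 0 0 == 0) = (g == 0).
Proof.
apply/idP/eqP => [|->]; last by rewrite mul0mx mxE.
rewrite !mxE psumr_eq0 => [/allP g0|i _]; last by rewrite mxE -expr2 sqr_ge0.
by apply/rowP => i; move: (g0 i (mem_index_enum i)); rewrite !mxE -expr2 sqrf_eq0 => /eqP.
Qed.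

Lemma eigenvalue_scalar (a x : R) : eigenvalue (a%:M : 'M[R]_n) x <-> x = a.
Proof.
split=> [/eigenvalueP[v]|->].
  rewrite mul_mx_scalar => /eqP; rewrite -subr_eq0 -scalerBl scaler_eq0 subr_eq0.
  by case/orP=> [/eqP->|/eqP->]; rewrite ?eqxx.
apply/eigenvalueP; exists (delta_mx 0 (Ordinal n_gt0)); first by rewrite mul_mx_scalar.
by apply/eqP => /matrixP/(_ 0 (Ordinal n_gt0)); rewrite !mxE !eqxx => /eqP; rewrite oner_eq0.
Qed.

Lemma eigenvalues_scalar (a : R) : [set x | eigenvalue (a%:M : 'M[R]_n) x] = [set a].
Proof. by apply/seteqP; split => x /=; rewrite eigenvalue_scalar. Qed.

Lemma lambda_max_scalar (a : R) : lambda_max (a%:M : 'M[R]_n) = a.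
Proof. by rewrite /lambda_max eigenvalues_scalar sup1. Qed.

Lemma lambda_min_scalar (a : R) : lambda_min (a%:M : 'M[R]_n) = a.
Proof. by rewrite /lambda_min eigenvalues_scalar inf1. Qed.

Lemma Lsub_scalar_hess (p : R) (phi : pt R n -> R) P (a : R) :
  hess phi P = a%:M -> Lsub p phi P = a * (n%:R + p - 2) / p.
Proof.
move=> hessE; rewrite /Lsub /Lop /Lup /lap hessE mxtrace_scalar -mulr_natr.
case: ifP => [g_neq0|_]; last by rewrite lambda_max_scalar lambda_min_scalar if_same; ring.
by rewrite mul_mx_scalar -scalemxAl mxE mulrK ?unitfE ?mulmx_tr_self_eq0 //; ring.
Qed.

End ScalarHessian.

Section Barrier.
Context {R : realType} {n : nat}.
Variables (z : 'rV[R]_n) (s A mu eta beta : R).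

Definition barrier : pt R n -> R := quad_exp z s (A + mu * s) 0 (- mu) mu eta beta.

Lemma barrierE P :
  barrier P = A + mu * (eucl2 (P.1 - z) - (P.2 - s)) + eta * expR (beta * (P.2 - s)).
Proof. by rewrite /barrier /quad_exp trmx0 mulmx0 mxE; ring. Qed.

Lemma C2_on_barrier : C2_on setT barrier.
Proof. by apply: C2_on_quad_exp_fun; do 6 eexists. Qed.

Lemma hess_barrier P : hess barrier P = (2 * mu)%:M.
Proof.
apply/matrixP => i j; rewrite /hess /barrier !mxE !pderiv_quad_exp_space /quad_exp.
rewrite mulr0 scale0r trmx0 mulmx0 !mxE eqxx eq_sym mulr_natr; ring.
Qed.

Lemma dt_barrier P : dt barrier P = - mu + eta * beta * expR (beta * (P.2 - s)).
Proof.
by rewrite /dt /barrier pderiv_quad_exp_time /quad_exp trmx0 mulmx0 mxE; ring.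
Qed.

Lemma Lsub_barrier_le (p : R) P : (0 < n)%N -> 0 <= eta * beta ->
  Lsub p barrier P - dt barrier P <= mu * (2 * (n%:R + p - 2) / p + 1).
Proof.
move=> n_gt0 eta_beta_ge0; rewrite (Lsub_scalar_hess n_gt0 p _ _ _ (hess_barrier P)) dt_barrier.
have : 0 <= eta * beta * expR (beta * (P.2 - s)) by rewrite mulr_ge0 ?expR_ge0.
lra.
Qed.

Lemma barrier_ge P : 0 <= eta -> A + mu * (eucl2 (P.1 - z) - (P.2 - s)) <= barrier P.
Proof. by move=> eta_ge0; rewrite barrierE lerDl mulr_ge0 ?expR_ge0. Qed.

Lemma barrier_ge_time P : 0 <= mu -> 0 <= eta ->
  A - mu * (P.2 - s) + eta * (1 + beta * (P.2 - s)) <= barrier P.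
Proof.
move=> mu_ge0 eta_ge0; rewrite barrierE.
have : 0 <= mu * eucl2 (P.1 - z) by rewrite mulr_ge0 ?eucl2_ge0.
have : eta * (1 + beta * (P.2 - s)) <= eta * expR (beta * (P.2 - s)).
  by rewrite ler_wpM2l ?expR_ge1Dx.
lra.
Qed.

End Barrier.

Section Comparison.
Context {R : realType} {n : nat} {p c0 : R} {f u : pt R n -> R}.
Hypothesis u_cont : forall P, Q1 P -> {for P, continuous u}.
Hypothesis f_ge : forall P, Uplus u P -> c0 <= f P.
Hypothesis u_sub : visc_sub p f (Uplus u) u.

Lemma visc_sub_no_local_max phi P0 : Uplus u P0 -> test_fun_at phi P0 ->
  Lsub p phi P0 - dt phi P0 < c0 -> ~ \forall P \near P0, u P - phi P <= u P0 - phi P0.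
Proof.
move=> UP0 phi_test lt_c0 max_P0; have := u_sub _ UP0 _ phi_test max_P0; have := f_ge _ UP0.
by rewrite /Lsub in lt_c0; case: ifP lt_c0 => _; lra.
Qed.

Lemma visc_sub_le_cyl phi z r lo hi : 0 < r -> cyl z r lo hi `<=` @Q1 R n ->
  C2_on setT phi -> (forall P, Lsub p phi P - dt phi P < c0) ->
  (forall P, cyl z r lo hi P -> 0 <= phi P) ->
  (forall P, cyl z r lo hi P -> eucl2 (P.1 - z) = r ^+ 2 -> u P < phi P) ->
  (forall P, cyl z r lo hi P -> P.2 = lo -> u P < phi P) ->
  (forall P, cyl z r lo hi P -> P.2 = hi -> u P < phi P) ->
  forall P, cyl z r lo hi P -> u P <= phi P.
Proof.
move=> r_gt0 D_Q1 phi_C2 phi_super phi_ge0 u_lat u_bot u_top P1 DP1.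
rewrite leNgt; apply/negP => phi_lt_u.
set D := cyl z r lo hi in D_Q1 phi_ge0 u_lat u_bot u_top DP1.
have [P0 DP0 P0_max] : exists2 P0, D P0 & forall P, D P -> u P - phi P <= u P0 - phi P0.
  have [_ /=] := DP1; rewrite in_itv /= => /andP[lo_le le_hi].
  apply: cyl_EVT_max (ltW r_gt0) (le_trans lo_le le_hi) _ => P DP.
  by apply: cvgB; [exact: u_cont (D_Q1 _ DP)|exact: (phi_C2 P I).1].
have gap : 0 < u P0 - phi P0.
  by apply: lt_le_trans (P0_max _ DP1); rewrite subr_gt0.
have [/= le_r] := DP0; rewrite in_itv /= => /andP[lo_le le_hi].
have lt_r : eucl2 (P0.1 - z) < r ^+ 2.
  by rewrite lt_neqAle le_r andbT; apply/eqP => /(u_lat _ DP0); lra.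
have lo_lt : lo < P0.2 by rewrite lt_neqAle lo_le andbT; apply/eqP => /esym/(u_bot _ DP0); lra.
have lt_hi : P0.2 < hi by rewrite lt_neqAle le_hi andbT; apply/eqP => /(u_top _ DP0); lra.
apply: (@visc_sub_no_local_max phi P0).
- by split; [exact: D_Q1|have := phi_ge0 _ DP0; lra].
- by exists setT; split; [exact: openT|split].
- exact: phi_super.
- apply: filterS (near_cyl (lo := lo) (hi := hi) _ lt_r _) => [P DP|]; first exact: P0_max.
  by rewrite lo_lt lt_hi.
Qed.

Section Deficit.
Hypothesis n_gt0 : (0 < n)%N.
Context {z : 'rV[R]_n} {s r mu delta d : R}.
Hypotheses (r_gt0 : 0 < r) (mu_gt0 : 0 < mu) (delta_gt0 : 0 < delta) (d_gt0 : 0 < d).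
Hypothesis mu_small : mu * (2 * (n%:R + p - 2) / p + 1) < c0.
Hypothesis cyl_Q1 : cyl z r (s - r ^+ 2) (s + d) `<=` @Q1 R n.
Hypothesis u_bot : forall x, eucl2 (x - z) <= r ^+ 2 ->
  u (x, s - r ^+ 2) <= mu * r ^+ 2 + u (z, s) - delta.
Hypothesis u_lat : forall x t, eucl2 (x - z) = r ^+ 2 -> s - r ^+ 2 <= t <= s + d ->
  u (x, t) < mu * r ^+ 2 + u (z, s) - delta / 2.

(* Weight for the bound (1 - lam) |x - z|^2 - |z' - z|^2 / lam <= |x - z'|^2; it makes the
   loss mu * lam * r^2 on the lateral boundary equal to delta / 16. *)
Let lam := delta / (16 * mu * r ^+ 2).

Let lam_gt0 : 0 < lam.
Proof. by rewrite divr_gt0 // !mulr_gt0 // exprn_gt0. Qed.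

Lemma barrier_dominates z' s' A eta beta tau :
  0 < eta -> 0 <= beta -> mu * tau <= eta ->
  0 < A - eta -> u (z, s) - delta / 4 <= A - eta ->
  s - r ^+ 2 <= s' -> s' + tau <= s + d ->
  mu * eucl2 (z' - z) <= lam * (delta / 16) -> mu * (s - s') <= delta / 16 ->
  (forall x, eucl2 (x - z) <= r ^+ 2 ->
    u (x, s' + tau) <= A - mu * tau + eta * (beta * tau)) ->
  forall P, cyl z r (s - r ^+ 2) (s' + tau) P -> u P <= barrier z' s' A mu eta beta P.
Proof.
move=> eta_gt0 beta_ge0 mu_tau A_eta_gt0 A_eta_ge s'_ge T_le z'_near s'_near u_top.
have phi_ge (Q : pt R n) :
    A + mu * (eucl2 (Q.1 - z') - (Q.2 - s')) <= barrier z' s' A mu eta beta Q.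
  exact: barrier_ge (ltW eta_gt0).
have mu_eucl2_ge0 (x : 'rV[R]_n) : 0 <= mu * eucl2 x by rewrite mulr_ge0 ?eucl2_ge0 ?ltW.
have mu_t_le (t : R) : t <= s' + tau -> mu * (t - s') <= eta.
  by move=> t_le; apply: le_trans mu_tau; rewrite ler_pM2l //; lra.
apply: (visc_sub_le_cyl _ _ _ _ _ r_gt0 _ (C2_on_barrier _ _ _ _ _ _)).
- by move=> P /(cyl_subset T_le)/cyl_Q1.
- move=> Q; apply: le_lt_trans mu_small.
  by apply: Lsub_barrier_le => //; exact: mulr_ge0 (ltW eta_gt0) beta_ge0.
- move=> [x t] [_ /=]; rewrite in_itv /= => /andP[_ /mu_t_le].
  by have := phi_ge (x, t); have := mu_eucl2_ge0 (x - z'); have := A_eta_gt0; rewrite /=; lra.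
- move=> [x t] [/= x_in]; rewrite in_itv /= => /andP[t_ge t_le] x_sph.
  have := u_lat _ _ x_sph (introT andP (conj t_ge (le_trans t_le T_le))).
  have := eucl2_subr_ge (x - z) (z' - z) lam lam_gt0.
  rewrite (_ : x - z - (z' - z) = x - z') ?x_sph; last by rewrite opprB addrA subrK.
  move=> /(ler_wpM2l (ltW mu_gt0)) peter_paul u_lt.
  have mu_lam : mu * lam * r ^+ 2 = delta / 16 by rewrite /lam; field; rewrite !gt_eqF.
  have mu_lamV : mu * (lam^-1 * eucl2 (z' - z)) <= delta / 16.
    by rewrite mulrCA ler_pdivrMl // mulrA; move: z'_near; lra.
  by have := phi_ge (x, t); have := mu_t_le _ t_le; have := delta_gt0; rewrite /=; lra.
- move=> [x t] [/= x_in _] -> /=.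
  have := u_bot _ x_in; have := phi_ge (x, s - r ^+ 2); have := mu_eucl2_ge0 (x - z').
  by have := delta_gt0; rewrite /=; lra.
- move=> [x t] [/= x_in _] -> /=; have := u_top _ x_in.
  have := barrier_ge_time z' s' A mu eta beta (x, s' + tau) (ltW mu_gt0) (ltW eta_gt0).
  by rewrite /= (_ : s' + tau - s' = tau); [lra|ring].
Qed.

Lemma no_Uplus_point_near {z' : 'rV[R]_n} {s' : R} :
  Uplus u (z', s') -> u (z, s) - delta / 16 < u (z', s') ->
  eucl2 (z' - z) <= r ^+ 2 -> mu * eucl2 (z' - z) <= lam * (delta / 16) ->
  s - r ^+ 2 <= s' <= s + d / 2 -> mu * (s - s') <= delta / 16 -> False.
Proof.
move=> [_ uP_gt0] uP_gt z'_in z'_near /andP[s'_ge s'_le] s'_near.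
set uP := u (z', s') in uP_gt0 uP_gt *.
set eta := Num.min (uP / 4) (delta / 32).
have eta_gt0 : 0 < eta by rewrite lt_min !divr_gt0.
have [eta_le_uP eta_le_delta] : eta <= uP / 4 /\ eta <= delta / 32.
  by split; rewrite ge_min lexx ?orbT.
set tau := Num.min (d / 2) (eta / mu).
have tau_gt0 : 0 < tau by rewrite lt_min !divr_gt0.
have [tau_le_d mu_tau] : tau <= d / 2 /\ mu * tau <= eta.
  split; first by rewrite ge_min lexx.
  by rewrite mulrC -ler_pdivlMr // ge_min lexx orbT.
have T_le : s' + tau <= s + d by lra.
set D := cyl z r (s - r ^+ 2) (s' + tau).
have DP' : D (z', s') by split; rewrite /= ?in_itv /= ?s'_ge //; lra.
have [Pm _ Pm_max] : exists2 Pm, D Pm & forall P, D P -> u P <= u Pm.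
  apply: cyl_EVT_max (ltW r_gt0) (le_trans s'_ge _) _ => [|P /(cyl_subset T_le)/cyl_Q1/u_cont //].
  by rewrite lerDl ltW.
set A := uP - 2 * eta.
(* Large enough for the exponential to beat max u on the top of the cylinder. *)
set beta := (`|u Pm - A| + mu * tau + 1) / (eta * tau).
have eta_beta_tau : eta * (beta * tau) = `|u Pm - A| + mu * tau + 1.
  by rewrite /beta; field; rewrite !gt_eqF.
suff : uP <= barrier z' s' A mu eta beta (z', s').
  by rewrite barrierE /= !subrr eucl2_0 !mulr0 expR0 mulr1 /A; lra.
apply: (@barrier_dominates z' s' A eta beta tau) => //.
- apply: divr_ge0; last by rewrite ltW ?mulr_gt0.
  by have := normr_ge0 (u Pm - A); have := mulr_gt0 mu_gt0 tau_gt0; lra.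
- by rewrite /A; lra.
- by have := delta_gt0; rewrite /A; lra.
- move=> x x_in; have : D (x, s' + tau) by split=> //=; rewrite in_itv /= lexx andbT; lra.
  move=> /Pm_max; rewrite eta_beta_tau.
  by have := ler_norm (u Pm - A); lra.
Qed.

Lemma not_closure_Uplus : ~ closure (Uplus u) (z, s).
Proof.
move=> zs_cl.
have zs_Q1 : Q1 (z, s).
  have r2_gt0 : 0 < r ^+ 2 by rewrite exprn_gt0.
  apply: cyl_Q1; split; first by rewrite /= subrr eucl2_0 ltW.
  by rewrite /= in_itv /=; apply/andP; split; have := d_gt0; lra.
set rho := Num.min (r ^+ 2) (lam * (delta / 16) / mu).
set eps := Num.min (r ^+ 2) (Num.min (d / 2) (delta / (16 * mu))).
have rho_gt0 : 0 < rho by rewrite lt_min exprn_gt0 //= !(divr_gt0, mulr_gt0).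
have eps_gt0 : 0 < eps by rewrite !lt_min exprn_gt0 //= !(divr_gt0, mulr_gt0).
have : \forall Q \near (z, s), [/\ u (z, s) - delta / 16 < u Q, eucl2 (Q.1 - z) < rho,
    s - eps < Q.2 & Q.2 < s + eps].
  near=> Q; split; near: Q.
  - by apply: (cvgr_gt _ (u_cont _ zs_Q1)); have := delta_gt0; lra.
  - apply: (cvgr_lt _ (continuous_comp cvg_fst (continuous_eucl2B z _))).
    by rewrite /= subrr eucl2_0.
  - by apply: (cvgr_gt _ cvg_snd); rewrite /=; lra.
  - by apply: (cvgr_lt _ cvg_snd); rewrite /=; lra.
move=> /zs_cl[[z' s'] [UP [uP_gt /= /ltW z'_rho s'_gt s'_lt]]].
have [rho_r rho_lam] : rho <= r ^+ 2 /\ rho <= lam * (delta / 16) / mu.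
  by split; rewrite ge_min lexx ?orbT.
have [eps_r [eps_d eps_delta]] :
    [/\ eps <= r ^+ 2, eps <= d / 2 & eps <= delta / (16 * mu)].
  by split; rewrite !ge_min lexx ?orbT.
apply: (no_Uplus_point_near UP uP_gt).
- exact: le_trans z'_rho rho_r.
- by rewrite mulrC -ler_pdivlMr // (le_trans z'_rho rho_lam).
- by apply/andP; split; lra.
- have <- : mu * (delta / (16 * mu)) = delta / 16 by field; rewrite gt_eqF.
  by rewrite ler_pM2l //; lra.
Unshelve. all: end_near.
Qed.

End Deficit.

End Comparison.

Theorem lemma4p1 (R : realType) (n : nat) (p c0 c1 : R) (f u : pt R n -> R) :
  (0 < n)%N -> 1 < p -> 0 < c0 ->
  (forall P, @Q1 R n P -> {for P, continuous u}) ->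
  (forall P, Uplus u P -> c0 <= f P <= c1) ->
  visc_sol p f (Uplus u) u ->
  forall (z : 'rV[R]_n) (s r : R),
    closure (Uplus u) (z, s) -> 0 < r ->
    Qcyl z s r `<=` @Q1 R n ->
    pbdry_Qminus z s r `<=` @Q1 R n ->
    ((Num.min (p * c0 / (4 * (n%:R + p - 2))) (c0 / 2) * r ^+ 2 + u (z, s))%:E
      <= ereal_sup [set (u P)%:E | P in pbdry_Qminus z s r])%E.
Proof.
move=> n_gt0 p_gt1 c0_gt0 u_cont f_bnd [u_sub _] z s r zs_cl r_gt0 Qcyl_Q1 pbdry_Q1.
have f_ge P : Uplus u P -> c0 <= f P by move/f_bnd => /andP[].
have n_ge1 : 1 <= n%:R :> R by rewrite ler1n.
have [mu0_gt0 mu0_le] := growth_rate_bound n_ge1 p_gt1 c0_gt0.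
rewrite leNgt; apply/negP => /ereal_sup_lt_bound[M M_lt u_le_M].
have [mu [delta [mu_gt0 mu_lt delta_gt0 M_le]]] := smaller_rate_gap mu0_gt0 r_gt0 M_lt.
have M_lt_lat : M < mu * r ^+ 2 + u (z, s) - delta / 2 by lra.
have [d [d_gt0 sd_lt1] u_lat] :=
  pbdry_lateral_strip r_gt0 u_cont Qcyl_Q1 pbdry_Q1 u_le_M M_lt_lat.
apply: (not_closure_Uplus u_cont f_ge u_sub n_gt0 r_gt0 mu_gt0 delta_gt0 d_gt0 _ _ _ u_lat zs_cl).
- have : 0 < 2 * (n%:R + p - 2) / p by rewrite divr_gt0 //; lra.
  by move=> ?; apply: lt_le_trans mu0_le; rewrite ltr_pM2r //; lra.
- exact: cyl_sub_Q1.
- by move=> x x_in; have := u_le_M (x, s - r ^+ 2) (or_intror (conj x_in erefl)); lra.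
Qed.
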